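(* Let $L$ be one of the logics $\mathbf{K4}_h$, $\mathbf{KD4}_h$, $\mathbf{S4}_h$, and let $G(L)$ be the corresponding sequent calculus $G(\mathbf{K4}_h)$, $G(\mathbf{KD4}_h)$, $G(\mathbf{S4}_h)$ described in the context. Then $G(L)$ is equivalent to $L$: for all finite multisets $\Gamma,\Delta$ of formulas of $\mathcal{L}_\infty$, the sequent $\Gamma\Rightarrow\Delta$ is provable in $G(L)$ if and only if $L\vdash \bigwedge\Gamma\rightarrow\bigvee\Delta$ (empty conjunction $=\top$, empty disjunction $=\bot$); in particular $L\vdash A$ iff $G(L)\vdash\ \Rightarrow A$.
   Context: The language $\mathcal{L}_\infty$ consists of modal formulas built from propositional atoms, $\bot,\top$, the connectives $\neg,\wedge,\vee,\rightarrow$ and infinitely many unary modalities $\Box_n$ ($n\in\mathbb{N}$), with the restriction that $\Box_n A$ is a formula only if $n$ is strictly greater than the index of every box occurring in $A$. All formulas below are assumed to be in $\mathcal{L}_\infty$ (so axiom instances and rule applications are only those producing $\mathcal{L}_\infty$-formulas). Hilbert systems: consider the axiom schemes (for all $n\ge 0$) $\mathbf{H}$: $\Box_n A\rightarrow\Box_{n+1}A$; $\mathbf{K}_h$: $\Box_n(A\rightarrow B)\rightarrow(\Box_nA\rightarrow\Box_nB)$; $\mathbf{4}_h$: $\Box_nA\rightarrow\Box_{n+1}\Box_nA$; $\mathbf{D}_h$: $\neg\Box_n\bot$; $\mathbf{T}_h$: $\Box_nA\rightarrow A$. For a set $X$ of schemes, $L(X)$ is the least set of $\mathcal{L}_\infty$-formulas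 containing all classical propositional tautologies (over $\mathcal{L}_\infty$-formulas) and all instances of the schemes in $X$, and closed under modus ponens and the rule: from $A$ infer $\Box_nA$ for any $n$ greater than all box indices in $A$. $\mathbf{K4}_h=L(\mathbf{H},\mathbf{K}_h,\mathbf{4}_h)$, $\mathbf{KD4}_h=L(\mathbf{H},\mathbf{K}_h,\mathbf{4}_h,\mathbf{D}_h)$, $\mathbf{S4}_h=L(\mathbf{H},\mathbf{K}_h,\mathbf{4}_h,\mathbf{T}_h)$. Sequent calculi: sequents $\Gamma\Rightarrow\Delta$ with finite multisets. All three systems contain the axioms $A\Rightarrow A$ and $\bot\Rightarrow$, the structural rules of left/right weakening, left/right contraction and cut (from $\Gamma_0\Rightarrow\Delta_0,A$ and $\Gamma_1,A\Rightarrow\Delta_1$ infer $\Gamma_0,\Gamma_1\Rightarrow\Delta_0,\Delta_1$), and the usual classical (LK-style) left and right rules for $\wedge,\vee,\rightarrow,\neg$. Modal rules (in each, the side condition is $n_i<n$ for all $i\in I$): $\Box_{4_h}R$: from $\{\sigma_r\}_{r\in R},\{\gamma_i,\Box_{n_i}\gamma_i\}_{i\in I}\Rightarrow A$ infer $\{\Box_n\sigma_r\}_{r\in R},\{\Box_{n_i}\gamma_i\}_{i\in I}\Rightarrow\Box_nA$; $\Box_{D_h}R$: from $\{\sigma_r\}_{r\in R},\{\gamma_i,\Box_{n_i}\gamma_i\}_{i\in I}\Rightarrow$ infer $\{\Box_n\sigma_r\}_{r\in R},\{\Box_{n_i}\gamma_i\}_{i\in I}\Rightarrow$; $\Box_{S_h}R$: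 from $\{\sigma_r\}_{r\in R},\{\Box_{n_i}\gamma_i\}_{i\in I}\Rightarrow A$ infer $\{\Box_n\sigma_r\}_{r\in R},\{\Box_{n_i}\gamma_i\}_{i\in I}\Rightarrow\Box_nA$; $\Box_hL$: from $\Gamma,A\Rightarrow\Delta$ infer $\Gamma,\Box_nA\Rightarrow\Delta$. $G(\mathbf{K4}_h)$ = axioms + structural + propositional rules + $\Box_{4_h}R$; $G(\mathbf{KD4}_h)$ = $G(\mathbf{K4}_h)$ + $\Box_{D_h}R$; $G(\mathbf{S4}_h)$ = axioms + structural + propositional rules + $\Box_{S_h}R$ + $\Box_hL$. *)

From Stdlib Require Import List Permutation Arith.
Import ListNotations.

Inductive form : Type :=
| Var : nat -> form
| Bot : form
| Top : form
| Neg : form -> form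
| And : form -> form -> form
| Or  : form -> form -> form
| Imp : form -> form -> form
| Box : nat -> form -> form.

Fixpoint bnd (A : form) (n : nat) : Prop :=
  match A with
  | Var _ | Bot | Top => True
  | Neg B => bnd B n
  | And B C | Or B C | Imp B C => bnd B n /\ bnd C n
  | Box m B => m < n /\ bnd B n
  end.

(* wf A : A is a formula of L_infinity *)
Fixpoint wf (A : form) : Prop :=
  match A with
  | Var _ | Bot | Top => True
  | Neg B => wf B
  | And B C | Or B C | Imp B C => wf B /\ wf C
  | Box m B => wf B /\ bnd B m
  end.

(* Classical propositional evaluation: atoms and boxed formulas are
   treated as propositional variables. *)
Fixpoint eval (v : form -> bool) (A : form) : bool :=
  match A with
  | Var p => v (Var p)
  | Bot => false
  | Top => true
  | Neg B => negb (eval v B)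
  | And B C => eval v B && eval v C
  | Or B C => eval v B || eval v C
  | Imp B C => implb (eval v B) (eval v C)
  | Box m B => v (Box m B)
  end.

Definition taut (A : form) : Prop := forall v, eval v A = true.

Inductive logic : Type := K4h | KD4h | S4h.

Inductive hprf (L : logic) : form -> Prop :=
| h_taut A : wf A -> taut A -> hprf L A
| h_H n A : wf (Imp (Box n A) (Box (S n) A)) ->
    hprf L (Imp (Box n A) (Box (S n) A))
| h_K n A B : wf (Imp (Box n (Imp A B)) (Imp (Box n A) (Box n B))) ->
    hprf L (Imp (Box n (Imp A B)) (Imp (Box n A) (Box n B)))
| h_4 n A : wf (Imp (Box n A) (Box (S n) (Box n A))) ->
    hprf L (Imp (Box n A) (Box (S n) (Box n A)))
| h_D n : L = KD4h -> hprf L (Neg (Box n Bot))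
| h_T n A : L = S4h -> wf (Imp (Box n A) A) -> hprf L (Imp (Box n A) A)
| h_mp A B : hprf L (Imp A B) -> hprf L A -> hprf L B
| h_nec n A : bnd A n -> hprf L A -> hprf L (Box n A).

Definition bx (p : nat * form) : form := Box (fst p) (snd p).

(* Sequent calculi G(L); multisets are lists modulo the exchange rule g_perm. *)
Inductive gprf (L : logic) : list form -> list form -> Prop :=
| g_id A : wf A -> gprf L [A] [A]
| g_bot : gprf L [Bot] []
| g_top : gprf L [] [Top]
| g_perm G D G' D' : Permutation G G' -> Permutation D D' ->
    gprf L G D -> gprf L G' D'
| g_wL A G D : wf A -> gprf L G D -> gprf L (A :: G) D
| g_wR A G D : wf A -> gprf L G D -> gprf L G (A :: D)
| g_cL A G D : gprf L (A :: A :: G) D -> gprf L (A :: G) D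
| g_cR A G D : gprf L G (A :: A :: D) -> gprf L G (A :: D)
| g_cut A G0 D0 G1 D1 : gprf L G0 (A :: D0) -> gprf L (A :: G1) D1 ->
    gprf L (G0 ++ G1) (D0 ++ D1)
| g_andL A B G D : gprf L (A :: B :: G) D -> gprf L (And A B :: G) D
| g_andR A B G D : gprf L G (A :: D) -> gprf L G (B :: D) ->
    gprf L G (And A B :: D)
| g_orL A B G D : gprf L (A :: G) D -> gprf L (B :: G) D ->
    gprf L (Or A B :: G) D
| g_orR A B G D : gprf L G (A :: B :: D) -> gprf L G (Or A B :: D)
| g_impL A B G D : gprf L G (A :: D) -> gprf L (B :: G) D ->
    gprf L (Imp A B :: G) D
| g_impR A B G D : gprf L (A :: G) (B :: D) -> gprf L G (Imp A B :: D)
| g_negL A G D : gprf L G (A :: D) -> gprf L (Neg A :: G) D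
| g_negR A G D : gprf L (A :: G) D -> gprf L G (Neg A :: D)
| g_box4R n A (sig : list form) (gam : list (nat * form)) :
    (L = K4h \/ L = KD4h) ->
    Forall (fun p => fst p < n) gam ->
    wf (Box n A) -> Forall (fun s => wf (Box n s)) sig ->
    gprf L (sig ++ map snd gam ++ map bx gam) [A] ->
    gprf L (map (Box n) sig ++ map bx gam) [Box n A]
| g_boxDR n (sig : list form) (gam : list (nat * form)) :
    L = KD4h ->
    Forall (fun p => fst p < n) gam ->
    Forall (fun s => wf (Box n s)) sig ->
    gprf L (sig ++ map snd gam ++ map bx gam) [] ->
    gprf L (map (Box n) sig ++ map bx gam) []
| g_boxSR n A (sig : list form) (gam : list (nat * form)) :
    L = S4h ->
    Forall (fun p => fst p < n) gam ->
    wf (Box n A) -> Forall (fun s => wf (Box n s)) sig ->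
    gprf L (sig ++ map bx gam) [A] ->
    gprf L (map (Box n) sig ++ map bx gam) [Box n A]
| g_boxL n A G D : L = S4h -> wf (Box n A) ->
    gprf L (A :: G) D -> gprf L (Box n A :: G) D.

Fixpoint bigAnd (G : list form) : form :=
  match G with
  | [] => Top
  | [A] => A
  | A :: G' => And A (bigAnd G')
  end.

Fixpoint bigOr (D : list form) : form :=
  match D with
  | [] => Bot
  | [A] => A
  | A :: D' => Or A (bigOr D')
  end.

(* Soundness: every rule of G(L) preserves L-provability of the sequent formula
   /\G -> \/D.  For the propositional and structural rules this is a tautology.  The
   right box rules reduce to the regularity of Box n (from /\G -> A infer
   /\(Box n G) -> Box n A), because a side formula Box m g with m < n yields both
   Box n g (axiom H, iterated) and Box n (Box m g) (axiom 4_h), i.e. the boxed forms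
   of the premise formulas g and Box m g; axioms D_h and T_h validate Box_{D_h}R and
   Box_hL.
   Completeness: each axiom of L has a derivation in G(L) ending in one box rule,
   modus ponens is a cut, and every sequent that is a tautology when boxed formulas
   are read as atoms is derivable by decomposing its connectives.  Cutting
   => /\G -> \/D against the tautological sequent /\G -> \/D, G => D gives G => D. *)

From Stdlib Require Import List Permutation Arith Lia Bool.
Import ListNotations.

Ltac truth_table :=
  repeat match goal with
  | |- context [forallb ?f ?l] => destruct (forallb f l)
  | |- context [existsb ?f ?l] => destruct (existsb f l)
  | |- context [eval ?v ?A] => destruct (eval v A)
  | |- context [?v (Box ?n ?A)] => destruct (v (Box n A))
  | |- context [?v (Var ?n)] => destruct (v (Var n))
  end; simpl; intros; try reflexivity; try discriminate; auto.

Lemma forallb_Permutation {T} (f : T -> bool) l l' :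
  Permutation l l' -> forallb f l = forallb f l'.
Proof.
  intros Hp. apply eq_iff_eq_true. rewrite !forallb_forall.
  split; intros H x Hx; apply H.
  - now apply Permutation_in with l'; [symmetry|].
  - now apply Permutation_in with l.
Qed.

Lemma existsb_Permutation {T} (f : T -> bool) l l' :
  Permutation l l' -> existsb f l = existsb f l'.
Proof.
  intros Hp. apply eq_iff_eq_true. rewrite !existsb_exists.
  split; intros [x [Hx Hfx]]; exists x; split; auto.
  - now apply Permutation_in with l.
  - now apply Permutation_in with l'; [symmetry|].
Qed.

Lemma In_Permutation_cons {T} (a : T) l : In a l -> exists l', Permutation l (a :: l').
Proof.
  intros H. apply in_split in H as [l1 [l2 ->]].
  exists (l1 ++ l2). symmetry. apply Permutation_middle.
Qed.

Lemma existsb_false_In {T} (f : T -> bool) l x : existsb f l = false -> In x l -> f x = false.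
Proof.
  intros Hl Hx. apply not_true_is_false. intros Hfx.
  enough (existsb f l = true) by congruence.
  apply existsb_exists; eauto.
Qed.

Lemma eval_bigAnd v G : eval v (bigAnd G) = forallb (eval v) G.
Proof.
  induction G as [|A [|B G] IH]; simpl in *; [reflexivity| |].
  - now rewrite andb_true_r.
  - now rewrite IH.
Qed.

Lemma eval_bigOr v D : eval v (bigOr D) = existsb (eval v) D.
Proof.
  induction D as [|A [|B D] IH]; simpl in *; [reflexivity| |].
  - now rewrite orb_false_r.
  - now rewrite IH.
Qed.

Lemma eval_sequent v G D :
  eval v (Imp (bigAnd G) (bigOr D)) = implb (forallb (eval v) G) (existsb (eval v) D).
Proof. cbn [eval]. now rewrite eval_bigAnd, eval_bigOr. Qed.

Lemma wf_bigAnd G : Forall wf G -> wf (bigAnd G).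
Proof. induction 1 as [|A [|B G] HA HG IH]; simpl in *; auto. Qed.

Lemma wf_bigOr D : Forall wf D -> wf (bigOr D).
Proof. induction 1 as [|A [|B D] HA HD IH]; simpl in *; auto. Qed.

Lemma wf_sequent G D : Forall wf G -> Forall wf D -> wf (Imp (bigAnd G) (bigOr D)).
Proof. split; [apply wf_bigAnd | apply wf_bigOr]; auto. Qed.

Lemma bnd_le A m n : bnd A m -> m <= n -> bnd A n.
Proof. induction A; simpl; intuition lia. Qed.

(** * Derived rules of the Hilbert systems *)

Lemma hprf_wf L A : hprf L A -> wf A.
Proof. induction 1; simpl in *; intuition. Qed.

Lemma hprf_taut_consequence L A B :
  hprf L A -> wf B -> (forall v, eval v A = true -> eval v B = true) -> hprf L B.
Proof.
  intros HA HB Hv. apply h_mp with A; auto.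
  apply h_taut; [split; eauto using hprf_wf|].
  intros v; specialize (Hv v); simpl; now destruct (eval v A); simpl; auto.
Qed.

Lemma hprf_taut_consequence2 L A B C : hprf L A -> hprf L B -> wf C ->
  (forall v, eval v A = true -> eval v B = true -> eval v C = true) -> hprf L C.
Proof.
  intros HA HB HC Hv. apply h_mp with B; auto. apply h_mp with A; auto.
  apply h_taut; [repeat split; eauto using hprf_wf|].
  intros v; specialize (Hv v); simpl; now destruct (eval v A), (eval v B); simpl; auto.
Qed.

Lemma hprf_imp_trans L A B C : hprf L (Imp A B) -> hprf L (Imp B C) -> hprf L (Imp A C).
Proof.
  intros HAB HBC. pose proof (hprf_wf _ _ HAB). pose proof (hprf_wf _ _ HBC).
  apply (hprf_taut_consequence2 _ _ _ _ HAB HBC); [simpl in *; tauto|].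
  intros v; simpl; truth_table.
Qed.

Lemma hprf_imp_refl L A : wf A -> hprf L (Imp A A).
Proof. intros HA. apply h_taut; [now split|]. intros v; simpl; truth_table. Qed.

Lemma hprf_box_le L m n A : m <= n -> wf A -> bnd A m -> hprf L (Imp (Box m A) (Box n A)).
Proof.
  intros Hmn HA Hb. induction Hmn as [|n Hmn IH].
  - now apply hprf_imp_refl.
  - apply hprf_imp_trans with (Box n A); [exact IH|].
    apply h_H; simpl; repeat split; auto; apply bnd_le with m; auto.
Qed.

Lemma hprf_box_4 L m n A : m < n -> wf A -> bnd A m ->
  hprf L (Imp (Box m A) (Box n (Box m A))).
Proof.
  intros Hmn HA Hb. apply hprf_imp_trans with (Box (S m) (Box m A)).
  - apply h_4; simpl; repeat split; auto; apply bnd_le with m; auto.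
  - apply hprf_box_le; simpl; auto.
    split; [lia|]. apply bnd_le with m; auto.
Qed.

Lemma hprf_bigAnd_In L G A : In A G -> Forall wf G -> hprf L (Imp (bigAnd G) A).
Proof.
  intros HA HG. rewrite Forall_forall in HG.
  apply h_taut; [split; auto; apply wf_bigAnd, Forall_forall; auto|].
  intros v. cbn [eval]. rewrite eval_bigAnd.
  destruct (forallb (eval v) G) eqn:E; simpl; auto.
  now rewrite forallb_forall in E; rewrite E.
Qed.

Lemma hprf_imp_bigAnd L X D : Forall wf D -> wf X ->
  (forall A, In A D -> hprf L (Imp X A)) -> hprf L (Imp X (bigAnd D)).
Proof.
  induction 1 as [|A D HA HD IH]; intros HX HXD.
  - apply h_taut; [now split|]. intros v; simpl; truth_table.
  - apply (hprf_taut_consequence2 _ _ _ _ (HXD A (in_eq A D))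
             (IH HX (fun B HB => HXD B (in_cons A B D HB)))).
    + split; [|apply wf_bigAnd]; auto.
    + intros v. cbn [eval]. rewrite !eval_bigAnd. simpl. truth_table.
Qed.

Lemma hprf_box_bigAnd L n G A : Forall wf G -> Forall (fun B => bnd B n) G ->
  wf A -> bnd A n ->
  hprf L (Imp (bigAnd G) A) -> hprf L (Imp (bigAnd (map (Box n) G)) (Box n A)).
Proof.
  revert A. induction G as [|B G IH]; intros A HG HGn HA HAn H.
  - apply hprf_taut_consequence with (Box n A); [apply h_nec; auto| |].
    + apply hprf_taut_consequence with (1 := H); [exact HA|]. intros v; simpl; truth_table.
    + simpl; auto.
    + intros v; simpl; truth_table.
  - inversion HG; inversion HGn; subst.
    assert (HBA : hprf L (Imp (bigAnd (map (Box n) G)) (Box n (Imp B A)))).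
    { apply IH; try (simpl; tauto); auto.
      apply hprf_taut_consequence with (1 := H); [repeat split; auto using wf_bigAnd|].
      intros v. cbn [eval]. rewrite !eval_bigAnd. simpl. truth_table. }
    apply (hprf_taut_consequence2 _ _ _ _ HBA (h_K L n B A ltac:(simpl; tauto))).
    + split; [|simpl; auto]. apply wf_bigAnd.
      apply Forall_map, Forall_forall. intros C HC; simpl.
      rewrite Forall_forall in *; auto.
    + intros v. cbn [eval]. rewrite !eval_bigAnd. simpl. truth_table.
Qed.

(** * Soundness *)

Lemma in_map_snd_bx_inv (gam : list (nat * form)) B :
  In B (map snd gam ++ map bx gam) ->
  exists m A, In (m, A) gam /\ (B = A \/ B = Box m A).
Proof.
  intros HB. apply in_app_iff in HB as [HB|HB];
    apply in_map_iff in HB as [[m A] [<- Hp]]; exists m, A; simpl; auto.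
Qed.

Section BoxRight.
Variables (n : nat) (sig : list form) (gam : list (nat * form)).
Hypothesis gam_lt : Forall (fun p => fst p < n) gam.
Hypothesis wf_sig : Forall (fun s => wf (Box n s)) sig.
Hypothesis wf_gam : Forall wf (map bx gam).

Lemma wf_box_premise :
  Forall (fun B => wf B /\ bnd B n) (sig ++ map snd gam ++ map bx gam).
Proof.
  apply Forall_forall. intros B HB.
  apply in_app_iff in HB as [HB|HB]; [exact (proj1 (Forall_forall _ _) wf_sig B HB)|].
  apply in_map_snd_bx_inv in HB as [m [A [Hp HBp]]].
  pose proof (proj1 (Forall_forall _ _) gam_lt _ Hp) as Hmn.
  pose proof (proj1 (Forall_forall _ _) wf_gam _ (in_map bx gam _ Hp)) as [HA HAm].
  simpl in *. destruct HBp; subst; simpl; repeat split; auto;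
    apply bnd_le with m; auto; lia.
Qed.

Lemma hprf_box_context L B : In B (sig ++ map snd gam ++ map bx gam) ->
  hprf L (Imp (bigAnd (map (Box n) sig ++ map bx gam)) (Box n B)).
Proof.
  assert (Hw : Forall wf (map (Box n) sig ++ map bx gam)).
  { apply Forall_app; split; auto. now apply Forall_map. }
  intros HB. apply in_app_iff in HB as [HB|HB].
  { apply hprf_bigAnd_In; auto. apply in_or_app; left; now apply in_map. }
  apply in_map_snd_bx_inv in HB as [m [A [Hp HBp]]].
  pose proof (proj1 (Forall_forall _ _) gam_lt _ Hp) as Hmn.
  pose proof (proj1 (Forall_forall _ _) wf_gam _ (in_map bx gam _ Hp)) as [HA HAm].
  simpl in *. apply hprf_imp_trans with (Box m A).
  { apply hprf_bigAnd_In; auto. apply in_or_app; right. now apply (in_map bx gam (m, A)). }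
  destruct HBp; subst; [apply hprf_box_le; auto; lia | apply hprf_box_4; auto].
Qed.

Lemma hprf_box_right L A : wf (Box n A) ->
  hprf L (Imp (bigAnd (sig ++ map snd gam ++ map bx gam)) A) ->
  hprf L (Imp (bigAnd (map (Box n) sig ++ map bx gam)) (Box n A)).
Proof.
  intros [HA HAn] H. pose proof wf_box_premise as Hprem.
  apply hprf_imp_trans with (bigAnd (map (Box n) (sig ++ map snd gam ++ map bx gam))).
  - apply hprf_imp_bigAnd.
    + apply Forall_map. revert Hprem. apply Forall_impl. simpl; tauto.
    + apply wf_bigAnd, Forall_app. split; [|exact wf_gam]. now apply Forall_map.
    + intros B HB. apply in_map_iff in HB as [C [<- HC]]. now apply hprf_box_context.
  - apply hprf_box_bigAnd; auto.
    + revert Hprem. apply Forall_impl. tauto.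
    + revert Hprem. apply Forall_impl. tauto.
Qed.

Lemma hprf_box_right_S4 L A : wf (Box n A) ->
  hprf L (Imp (bigAnd (sig ++ map bx gam)) A) ->
  hprf L (Imp (bigAnd (map (Box n) sig ++ map bx gam)) (Box n A)).
Proof.
  intros HA H. apply hprf_box_right; [exact HA|].
  apply hprf_taut_consequence with (1 := H).
  - split; [apply wf_bigAnd | apply HA].
    eapply Forall_impl; [|exact wf_box_premise]. simpl; tauto.
  - intros v. cbn [eval]. rewrite !eval_bigAnd, !forallb_app. truth_table.
Qed.

Lemma hprf_box_right_D L : L = KD4h ->
  hprf L (Imp (bigAnd (sig ++ map snd gam ++ map bx gam)) Bot) ->
  hprf L (Imp (bigAnd (map (Box n) sig ++ map bx gam)) Bot).
Proof.
  intros HL H.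
  assert (HBot : hprf L (Imp (bigAnd (map (Box n) sig ++ map bx gam)) (Box n Bot))).
  { apply hprf_box_right; simpl; auto. }
  apply (hprf_taut_consequence2 _ _ _ _ HBot (h_D L n HL)).
  - pose proof (hprf_wf _ _ HBot) as [Hw _]. now split.
  - intros v. simpl. truth_table.
Qed.

End BoxRight.

Lemma gprf_wf L G D : gprf L G D -> Forall wf G /\ Forall wf D.
Proof.
  induction 1; repeat match goal with H : _ /\ _ |- _ => destruct H end;
  repeat match goal with H : Forall _ (_ :: _) |- _ => inversion H; subst; clear H end;
  try (split; repeat constructor; simpl; auto; fail).
  1: split; eapply Permutation_Forall; eauto.
  all: repeat match goal with H : Forall _ (_ ++ _) |- _ => apply Forall_app in H as [? ?] end;
    split; try (apply Forall_app; split); try rewrite Forall_map; auto; repeat constructor; auto.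
  all: rewrite Forall_map in *; auto.
Qed.

Ltac sequent_truth_table :=
  intros v; cbn [eval]; rewrite ?eval_bigAnd, ?eval_bigOr, ?forallb_app, ?existsb_app;
  simpl; truth_table.

Theorem gprf_sound L G D : gprf L G D -> hprf L (Imp (bigAnd G) (bigOr D)).
Proof.
  (* The copy [Hconcl] becomes the derivation of each conclusion, hence its well-formedness. *)
  intros H. pose proof H as Hconcl.
  induction H; destruct (gprf_wf _ _ _ Hconcl) as [WG WD];
    pose proof (wf_sequent _ _ WG WD) as W;
    repeat match goal with IH : gprf ?L ?G ?D -> _, H : gprf ?L ?G ?D |- _ => specialize (IH H) end;
    first
    [ solve [apply h_taut; [exact W | sequent_truth_table]]
    | solve [eapply hprf_taut_consequence; [exact IHgprf | exact W | sequent_truth_table]]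
    | solve [eapply hprf_taut_consequence2;
             [exact IHgprf1 | exact IHgprf2 | exact W | sequent_truth_table]]
    | idtac ].
  - apply hprf_taut_consequence with (1 := IHgprf); [exact W|].
    intros v. rewrite !eval_sequent.
    now erewrite forallb_Permutation, existsb_Permutation by eassumption.
  - apply Forall_app in WG as [_ Wgam]. now apply hprf_box_right.
  - apply Forall_app in WG as [_ Wgam]. now apply hprf_box_right_D.
  - apply Forall_app in WG as [_ Wgam]. now apply hprf_box_right_S4.
  - apply (hprf_taut_consequence2 _ _ _ _ IHgprf
             (h_T L n A ltac:(assumption) ltac:(simpl in *; tauto)));
      [exact W | sequent_truth_table].
Qed.

(** * Propositional completeness of the sequent calculi *)

Definition form_eq_dec : forall A B : form, {A = B} + {A <> B}.
Proof. decide equality; apply Nat.eq_dec. Defined.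

Definition compound (A : form) : bool :=
  match A with Neg _ | And _ _ | Or _ _ | Imp _ _ => true | _ => false end.

(* Boxed formulas count as atoms: the decomposition below never enters a box. *)
Fixpoint prop_size (A : form) : nat :=
  match A with
  | Neg B => S (prop_size B)
  | And B C | Or B C | Imp B C => S (prop_size B + prop_size C)
  | _ => 1
  end.

Fixpoint prop_size_list (l : list form) : nat :=
  match l with [] => 0 | A :: l' => prop_size A + prop_size_list l' end.

Lemma lsize_Permutation l l' : Permutation l l' -> prop_size_list l = prop_size_list l'.
Proof. induction 1; simpl; lia. Qed.

Definition valid (G D : list form) : Prop :=
  forall v, forallb (eval v) G = true -> existsb (eval v) D = true.

Lemma valid_Permutation G D G' D' :
  Permutation G G' -> Permutation D D' -> valid G D -> valid G' D'.
Proof.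
  intros HG HD Hv v. rewrite <- (forallb_Permutation _ _ _ HG), <- (existsb_Permutation _ _ _ HD).
  apply Hv.
Qed.

Lemma gprf_weaken L G0 D0 G D : gprf L G0 D0 -> Forall wf G -> Forall wf D ->
  (exists G', Permutation G (G0 ++ G')) -> (exists D', Permutation D (D0 ++ D')) ->
  gprf L G D.
Proof.
  intros H HG HD [G' PG] [D' PD].
  apply (Permutation_Forall PG), Forall_app in HG as [_ HG'].
  apply (Permutation_Forall PD), Forall_app in HD as [_ HD'].
  apply g_perm with (G' ++ G0) (D' ++ D0);
    [rewrite PG; apply Permutation_app_comm | rewrite PD; apply Permutation_app_comm |].
  clear PG PD.
  induction HD' as [|B D' HB _ IH]; [|now apply g_wR].
  induction HG' as [|A G' HA _ IH]; [exact H | now apply g_wL].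
Qed.

Lemma eval_not_compound v A : compound A = false -> A <> Bot -> A <> Top -> eval v A = v A.
Proof. destruct A; simpl; congruence. Qed.

(* Unless the sequent is an axiom up to weakening, the valuation that is true exactly
   on the members of [G] refutes it. *)
Lemma gprf_valid_irreducible L G D : Forall wf G -> Forall wf D ->
  existsb compound G = false -> existsb compound D = false -> valid G D -> gprf L G D.
Proof.
  intros HG HD HcG HcD Hv.
  destruct (in_dec form_eq_dec Bot G) as [HBot|HBot].
  { apply (gprf_weaken L [Bot] []); auto using g_bot;
      [now apply In_Permutation_cons | now exists D]. }
  destruct (in_dec form_eq_dec Top D) as [HTop|HTop].
  { apply (gprf_weaken L [] [Top]); auto using g_top;
      [now exists G | now apply In_Permutation_cons]. }
  destruct (Exists_dec (fun A => In A D) G (fun A => in_dec form_eq_dec A D)) as [Hc|Hc].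
  { apply Exists_exists in Hc as [A [HAG HAD]].
    apply (gprf_weaken L [A] [A]); auto; try now apply In_Permutation_cons.
    apply g_id. now apply (proj1 (Forall_forall _ _) HG). }
  exfalso.
  set (v := fun X => if in_dec form_eq_dec X G then true else false).
  assert (HvG : forallb (eval v) G = true).
  { apply forallb_forall. intros X HX.
    destruct (form_eq_dec X Top) as [->|HXTop]; [reflexivity|].
    rewrite eval_not_compound by (eauto using existsb_false_In; congruence).
    unfold v. now destruct (in_dec form_eq_dec X G). }
  assert (HvD : existsb (eval v) D = false).
  { apply not_true_is_false. intros HvD. apply existsb_exists in HvD as [X [HX HXv]].
    destruct (form_eq_dec X Bot) as [->|HXBot]; [discriminate|].
    rewrite eval_not_compound in HXv by (eauto using existsb_false_In; congruence).
    unfold v in HXv. destruct (in_dec form_eq_dec X G) as [HXG|]; [|discriminate].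
    apply Hc, Exists_exists. eauto. }
  specialize (Hv v HvG). congruence.
Qed.

Ltac valid_premise Hv := intros v; specialize (Hv v); revert Hv; simpl; truth_table.

Section Decomposition.
Variables (L : logic) (n : nat).
Hypothesis IH : forall G D, prop_size_list G + prop_size_list D < n ->
  Forall wf G -> Forall wf D -> valid G D -> gprf L G D.

Lemma gprf_valid_compound_l A G D : compound A = true ->
  prop_size A + prop_size_list G + prop_size_list D <= n ->
  wf A -> Forall wf G -> Forall wf D -> valid (A :: G) D -> gprf L (A :: G) D.
Proof.
  intros Hc Hs HA HG HD Hv.
  destruct A; try discriminate; simpl in HA, Hs; try destruct HA;
    [apply g_negL | apply g_andL | apply g_orL | apply g_impL];
    apply IH; solve [simpl; lia | repeat constructor; auto | valid_premise Hv].
Qed.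

Lemma gprf_valid_compound_r A G D : compound A = true ->
  prop_size A + prop_size_list G + prop_size_list D <= n ->
  wf A -> Forall wf G -> Forall wf D -> valid G (A :: D) -> gprf L G (A :: D).
Proof.
  intros Hc Hs HA HG HD Hv.
  destruct A; try discriminate; simpl in HA, Hs; try destruct HA;
    [apply g_negR | apply g_andR | apply g_orR | apply g_impR];
    apply IH; solve [simpl; lia | repeat constructor; auto | valid_premise Hv].
Qed.

End Decomposition.

Lemma gprf_valid_bounded L n G D : prop_size_list G + prop_size_list D < n ->
  Forall wf G -> Forall wf D -> valid G D -> gprf L G D.
Proof.
  revert G D. induction n as [|n IH]; intros G D Hs HG HD Hv; [lia|].
  destruct (existsb compound G) eqn:HcG.
  { apply existsb_exists in HcG as [A [HA HcA]].
    destruct (In_Permutation_cons _ _ HA) as [G' HG'].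
    apply g_perm with (A :: G') D; [now symmetry | reflexivity |].
    rewrite (lsize_Permutation _ _ HG') in Hs.
    apply (Permutation_Forall HG') in HG. inversion HG; subst.
    apply (gprf_valid_compound_l L n IH); auto; [simpl in Hs; lia|].
    now apply valid_Permutation with G D. }
  destruct (existsb compound D) eqn:HcD.
  { apply existsb_exists in HcD as [A [HA HcA]].
    destruct (In_Permutation_cons _ _ HA) as [D' HD'].
    apply g_perm with G (A :: D'); [reflexivity | now symmetry |].
    rewrite (lsize_Permutation _ _ HD') in Hs.
    apply (Permutation_Forall HD') in HD. inversion HD; subst.
    apply (gprf_valid_compound_r L n IH); auto; [simpl in Hs; lia|].
    now apply valid_Permutation with G D. }
  now apply gprf_valid_irreducible.
Qed.

Lemma gprf_valid L G D : Forall wf G -> Forall wf D -> valid G D -> gprf L G D.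
Proof. apply gprf_valid_bounded with (n := S (prop_size_list G + prop_size_list D)). lia. Qed.

(** * Hilbert derivations in the sequent calculi *)

Ltac gprf_taut :=
  apply gprf_valid; [repeat constructor; simpl in *; tauto
                    | repeat constructor; simpl in *; tauto
                    | intros v; simpl; truth_table].

Lemma gprf_box_right L n sig A : Forall (fun s => wf (Box n s)) sig -> wf (Box n A) ->
  gprf L sig [A] -> gprf L (map (Box n) sig) [Box n A].
Proof.
  intros Hsig HA H. rewrite <- (app_nil_r (map (Box n) sig)). change [] with (map bx []).
  destruct L; [apply g_box4R | apply g_box4R | apply g_boxSR]; simpl; rewrite ?app_nil_r; auto.
Qed.

Lemma gprf_box_lt L m n A : m < n -> wf (Box m A) -> gprf L [Box m A] [Box n A].
Proof.
  intros Hmn [HA HAm].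
  assert (Hwf : wf (Box n A)) by (split; auto; apply bnd_le with m; auto; lia).
  destruct L; [apply (g_box4R _ n A [] [(m, A)]) | apply (g_box4R _ n A [] [(m, A)])
              | apply (g_boxSR _ n A [] [(m, A)])]; unfold bx; simpl; auto.
  3: apply g_boxL; [reflexivity | split; assumption |].
  all: gprf_taut.
Qed.

Lemma gprf_box_4 L m n A : m < n -> wf (Box m A) -> gprf L [Box m A] [Box n (Box m A)].
Proof.
  intros Hmn [HA HAm].
  assert (Hwf : wf (Box n (Box m A))) by (repeat split; auto; apply bnd_le with m; auto; lia).
  destruct L; [apply (g_box4R _ n _ [] [(m, A)]) | apply (g_box4R _ n _ [] [(m, A)])
              | apply (g_boxSR _ n _ [] [(m, A)])]; unfold bx; simpl; auto; gprf_taut.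
Qed.

Lemma gprf_modus_ponens L A B : gprf L [] [Imp A B] -> gprf L [] [A] -> gprf L [] [B].
Proof.
  intros HAB HA. pose proof (Forall_inv (proj2 (gprf_wf _ _ _ HAB))) as HwAB.
  apply (g_cut L A [] [] [] [B] HA).
  apply (g_cut L (Imp A B) [] [] [A] [B] HAB).
  gprf_taut.
Qed.

Lemma hprf_gprf L A : hprf L A -> gprf L [] [A].
Proof.
  induction 1 as [A HA Htaut | n A HA | n A B HA | n A HA | n -> | n A -> HA
                 | A B _ IHAB _ IHA | n A HAn _ IHA].
  - apply gprf_valid; auto. intros v _. simpl. now rewrite Htaut.
  - apply g_impR, gprf_box_lt; [lia | apply HA].
  - apply g_impR, g_impR. simpl in HA.
    apply (gprf_box_right L n [A; Imp A B]);
      [repeat constructor; simpl; tauto | simpl; tauto |].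
    gprf_taut.
  - apply g_impR, gprf_box_4; [lia | apply HA].
  - apply g_negR, (g_boxDR _ n [Bot] []);
      [reflexivity | constructor | repeat constructor | apply g_bot].
  - apply g_impR, g_boxL; [reflexivity | apply HA |]. gprf_taut.
  - exact (gprf_modus_ponens L A B IHAB IHA).
  - apply (gprf_box_right L n []); auto.
    split; [apply Forall_inv with (l := []), (gprf_wf _ _ _ IHA) | exact HAn].
Qed.

Theorem theorem3p7 (L : logic) :
  (forall G D : list form, Forall wf G -> Forall wf D ->
     (gprf L G D <-> hprf L (Imp (bigAnd G) (bigOr D)))) /\
  (forall A : form, wf A -> (hprf L A <-> gprf L nil (A :: nil))).
Proof.
  split.
  - intros G D HG HD. split; [apply gprf_sound|].
    intros H. apply (g_cut L _ [] [] G D (hprf_gprf L _ H)).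
    apply gprf_valid; [constructor; auto using wf_sequent | exact HD |].
    intros v. simpl. rewrite eval_bigAnd, eval_bigOr. truth_table.
  - intros A HA. split; [apply hprf_gprf|].
    intros H. apply hprf_taut_consequence with (1 := gprf_sound _ _ _ H); [exact HA|].
    intros v. simpl. truth_table.
Qed.
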